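(* Let $\mathcal{G}$ be an SPQN over binary random variables $X_1,\dots,X_N$ which is conditionally complete, conditionally decomposable and conditionally sound. Then for every node $v$ of $\mathcal{G}$, $\Psi_v$ is a normalized probability function over the variables indexed by $\mathrm{eff}(v)$ conditioned on the variables indexed by $\mathrm{cond}(v)$; precisely, for every $\mathbf b\in\{0,1,*\}^N$ with $b_i\in\{0,1\}$ for $i\in\mathrm{cond}(v)$ and $b_i=*$ for $i\notin\mathrm{cond}(v)$, $$\sum_{\substack{\mathbf x\in\{0,1,*\}^N:\\ x_i=b_i\ \forall i\notin \mathrm{eff}(v),\\ x_i\in\{0,1\}\ \forall i\in\mathrm{eff}(v)}}\Psi_v(\mathbf x)=1 .$$
   Context: An SPQN (Sum-Product-Quotient Network) over binary variables $X_1,\dots,X_N$ is a rooted directed acyclic computational graph evaluated on inputs $\mathbf x\in\{0,1,*\}^N$ ($*$ denotes a missing value). Its nodes are of four types. Leaves are indicators $\mathbb 1[x_i=a]$, $i\in[N]$, $a\in\{0,1\}$, whose value is $1$ if $x_i=a$, $0$ if $x_i=1-a$, and $1$ if $x_i=*$. A sum node $v$ outputs $\sum_{c}w_c\Psi_c(\mathbf x)$ over its children $c$, with strictly positive weights summing to $1$. A product node outputs $\prod_c\Psi_c(\mathbf x)$ over its children. A quotient node $v$ has exactly two children, a numerator $\mathrm{num}(v)$ and a denominator $\mathrm{den}(v)$, and outputs $\Psi_{\mathrm{num}(v)}(\mathbf x)/\Psi_{\mathrm{den}(v)}(\mathbf x)$. $\Psi_v$ denotes the function computed by the subgraph rooted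 at $v$; $\mathrm{ch}(v)$ is the set of children of $v$. Scope: $\mathrm{sc}(v)=\{i\}$ for a leaf of variable $i$, and $\mathrm{sc}(v)=\bigcup_{c\in\mathrm{ch}(v)}\mathrm{sc}(c)$ otherwise. Effective scope: $\mathrm{eff}(v)=\{i\}$ for a leaf of variable $i$; $\mathrm{eff}(v)=\bigcup_{c\in\mathrm{ch}(v)}\mathrm{eff}(c)$ for sum and product nodes; $\mathrm{eff}(v)=\mathrm{eff}(\mathrm{num}(v))\setminus\mathrm{eff}(\mathrm{den}(v))$ for quotient nodes. Conditioning scope: $\mathrm{cond}(v)=\mathrm{sc}(v)\setminus\mathrm{eff}(v)$. Conditionally complete: for every sum node $v$ and all $c_1,c_2\in\mathrm{ch}(v)$, $\mathrm{eff}(c_1)=\mathrm{eff}(c_2)$. Conditionally decomposable: for every product node $v$, (1) for all distinct $c_1,c_2\in\mathrm{ch}(v)$, $\mathrm{eff}(c_1)\cap\mathrm{eff}(c_2)=\emptyset$; and (2) the directed graph on vertex set $\mathrm{ch}(v)$ with an edge $c'\to c''$ whenever $\mathrm{eff}(c')\cap\mathrm{cond}(c'')\neq\emptyset$ is acyclic. Conditionally sound: for every quotient node $v$, $\Psi_{\mathrm{den}(v)}$ is strictly positive on all inputs, $\mathrm{cond}(\mathrm{den}(v))\subseteq\mathrm{cond}(\mathrm{num}(v))$, $\mathrm{eff}(\mathrm{den}(v))\subseteq\mathrm{eff}(\mathrm{num}(v))$, and for all $\mathbf a\in\{0,1,*\}^N$, $\Psi_{\mathrm{den}(v)}(\mathbf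 a)=\sum_{\mathbf z}\Psi_{\mathrm{num}(v)}(\mathbf z)$, the sum over $\mathbf z\in\{0,1,*\}^N$ with $z_i=a_i$ for $i\notin\mathrm{eff}(v)$ and $z_i\in\{0,1\}$ for $i\in\mathrm{eff}(v)$. *)

(* SPQNs represented as finite trees (unfolding of the DAG). *)
From HB Require Import structures.
From mathcomp Require Import all_boot all_order all_algebra.
Set Implicit Arguments. Unset Strict Implicit. Unset Printing Implicit Defensive.
Import Order.TTheory GRing.Theory Num.Theory.
Local Open Scope ring_scope.

Inductive spqn (R : Type) (N : nat) : Type :=
| SLeaf of 'I_N & bool
| SSum of seq (R * spqn R N)
| SProd of seq (spqn R N)
| SQuot of spqn R N & spqn R N.

Arguments SLeaf {R N}.
Arguments SSum {R N}.
Arguments SProd {R N}.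
Arguments SQuot {R N}.

(* inputs x in {0,1,*}^N : None encodes the missing value * *)
Definition input (N : nat) := {ffun 'I_N -> option bool}.

Fixpoint eval (R : realFieldType) (N : nat) (g : spqn R N) (x : input N) : R :=
  match g with
  | SLeaf i a => if x i is Some b then (if b == a then 1 else 0) else 1
  | SSum cs =>
      (fix f (l : seq (R * spqn R N)) : R :=
         match l with [::] => 0 | (w, c) :: l' => w * eval c x + f l' end) cs
  | SProd cs =>
      (fix f (l : seq (spqn R N)) : R :=
         match l with [::] => 1 | c :: l' => eval c x * f l' end) cs
  | SQuot n d => eval n x / eval d x
  end.

Fixpoint sc (R : Type) (N : nat) (g : spqn R N) : {set 'I_N} :=
  match g with
  | SLeaf i _ => [set i]
  | SSum cs =>
      (fix f (l : seq (R * spqn R N)) : {set 'I_N} :=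
         match l with [::] => set0 | (_, c) :: l' => sc c :|: f l' end) cs
  | SProd cs =>
      (fix f (l : seq (spqn R N)) : {set 'I_N} :=
         match l with [::] => set0 | c :: l' => sc c :|: f l' end) cs
  | SQuot n d => sc n :|: sc d
  end.

Fixpoint eff (R : Type) (N : nat) (g : spqn R N) : {set 'I_N} :=
  match g with
  | SLeaf i _ => [set i]
  | SSum cs =>
      (fix f (l : seq (R * spqn R N)) : {set 'I_N} :=
         match l with [::] => set0 | (_, c) :: l' => eff c :|: f l' end) cs
  | SProd cs =>
      (fix f (l : seq (spqn R N)) : {set 'I_N} :=
         match l with [::] => set0 | c :: l' => eff c :|: f l' end) cs
  | SQuot n d => eff n :\: eff d
  end.

Definition cond (R : Type) (N : nat) (g : spqn R N) : {set 'I_N} := sc g :\: eff g.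

Fixpoint all_nodes (R : Type) (N : nat) (P : spqn R N -> Prop) (g : spqn R N) : Prop :=
  P g /\
  match g with
  | SLeaf _ _ => True
  | SSum cs =>
      (fix f (l : seq (R * spqn R N)) : Prop :=
         match l with [::] => True | (_, c) :: l' => all_nodes P c /\ f l' end) cs
  | SProd cs =>
      (fix f (l : seq (spqn R N)) : Prop :=
         match l with [::] => True | c :: l' => all_nodes P c /\ f l' end) cs
  | SQuot n d => all_nodes P n /\ all_nodes P d
  end.

Definition dflt (R : Type) (N : nat) : spqn R N := SProd [::].

Definition sum_marg (R : realFieldType) (N : nat) (E : {set 'I_N}) (b : input N)
    (f : input N -> R) : R :=
  \sum_(z : input N | [forall i, if i \in E then z i != None else z i == b i]) f z.

Definition weights_ok (R : realFieldType) (N : nat) (g : spqn R N) : Prop :=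
  match g with
  | SSum cs => all (fun w => 0 < w) (map fst cs) /\ \sum_(p <- cs) p.1 = 1
  | _ => True
  end.

Definition cond_complete_node (R : realFieldType) (N : nat) (g : spqn R N) : Prop :=
  match g with
  | SSum cs =>
      forall j k : 'I_(size cs),
        eff (nth (dflt R N) (map snd cs) j) = eff (nth (dflt R N) (map snd cs) k)
  | _ => True
  end.

Definition dep_rel (R : Type) (N : nat) (cs : seq (spqn R N)) : rel 'I_(size cs) :=
  fun j k => eff (nth (dflt R N) cs j) :&: cond (nth (dflt R N) cs k) != set0.

Definition acyclic_rel (T : finType) (e : rel T) : Prop :=
  forall j k, e j k -> ~~ connect e k j.

Definition cond_decomposable_node (R : realFieldType) (N : nat) (g : spqn R N) : Prop :=
  match g with
  | SProd cs =>
      (forall j k : 'I_(size cs), j != k ->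
         eff (nth (dflt R N) cs j) :&: eff (nth (dflt R N) cs k) = set0)
      /\ acyclic_rel (@dep_rel R N cs)
  | _ => True
  end.

Definition cond_sound_node (R : realFieldType) (N : nat) (g : spqn R N) : Prop :=
  match g with
  | SQuot n d =>
      (forall x : input N, 0 < eval d x)
      /\ cond d \subset cond n
      /\ eff d \subset eff n
      /\ (forall a : input N, eval d a = sum_marg (eff (SQuot n d)) a (eval n))
  | _ => True
  end.

Definition spqn_valid (R : realFieldType) (N : nat) (G : spqn R N) : Prop :=
  all_nodes (@weights_ok R N) G.
Definition cond_complete (R : realFieldType) (N : nat) (G : spqn R N) : Prop :=
  all_nodes (@cond_complete_node R N) G.
Definition cond_decomposable (R : realFieldType) (N : nat) (G : spqn R N) : Prop :=
  all_nodes (@cond_decomposable_node R N) G.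
Definition cond_sound (R : realFieldType) (N : nat) (G : spqn R N) : Prop :=
  all_nodes (@cond_sound_node R N) G.

From HB Require Import structures.
From mathcomp Require Import all_boot all_order all_algebra.
Import Order.TTheory GRing.Theory Num.Theory.
Local Open Scope ring_scope.
Set Implicit Arguments. Unset Strict Implicit.

(* The
   children of a complete sum node are normalized over the same effective
   scope, so the node is a convex combination of normalized functions.  The
   denominator of a sound quotient only reads variables outside the effective
   scope, so it factors out of the marginal sum, which soundness identifies
   with it.  Among the children of a decomposable product node, acyclicity
   yields one whose effective variables condition no sibling; summing these
   out first contributes a factor 1 and leaves a product with one child fewer. *)

Section Structure.

Variables (R : Type) (N : nat).
Implicit Types (g : spqn R N) (P Q : spqn R N -> Prop).

Local Notation dflt := (dflt R N).

Definition children g : seq (spqn R N) :=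
  match g with
  | SLeaf _ _ => [::]
  | SSum cs => map snd cs
  | SProd cs => cs
  | SQuot n d => [:: n; d]
  end.

Lemma spqn_children_ind P :
  (forall g, (forall i, (i < size (children g))%N -> P (nth dflt (children g) i)) -> P g) ->
  forall g, P g.
Proof.
(* [IH] is kept out of reach of [done] on the absurd branches, where using it
   would violate the guard condition. *)
move=> H; fix IH 1 => g; apply: H; case: g => [i a|cs|cs|n d] k /=.
- by clear IH.
- elim: cs k => [|[w c] cs IHcs] [|k] /=;
    [by clear IH | by clear IH | move=> _; exact: IH | exact: IHcs].
- elim: cs k => [|c cs IHcs] [|k] /=;
    [by clear IH | by clear IH | move=> _; exact: IH | exact: IHcs].
- case: k => [|[|k]] /=; [move=> _; exact: IH | move=> _; exact: IH | by clear IH].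
Qed.

Lemma all_nodesE P g :
  all_nodes P g <->
  P g /\ forall i, (i < size (children g))%N -> all_nodes P (nth dflt (children g) i).
Proof.
case: g => [i a|cs|cs|n d] /=; split=> -[Pg Pch]; split=> //.
- elim: cs {Pg} Pch => [|[w c] cs IHcs] /= [] // Pc /IHcs Pcs [|k] //; exact: Pcs.
- elim: cs {Pg} Pch => [|[w c] cs IHcs] /=; first by [].
  by move=> Pcs; split; [exact: (Pcs 0%N) | apply: IHcs => k; exact: (Pcs k.+1)].
- elim: cs {Pg} Pch => [|c cs IHcs] /= [] // Pc /IHcs Pcs [|k] //; exact: Pcs.
- elim: cs {Pg} Pch => [|c cs IHcs] /=; first by [].
  by move=> Pcs; split; [exact: (Pcs 0%N) | apply: IHcs => k; exact: (Pcs k.+1)].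
- by case: Pch => Pn Pd [|[|k]].
- by split; [exact: (Pch 0%N) | exact: (Pch 1%N)].
Qed.

Lemma all_nodes_and P Q g :
  all_nodes P g -> all_nodes Q g -> all_nodes (fun v => P v /\ Q v) g.
Proof.
elim/spqn_children_ind: g => g IH /all_nodesE[Pg Pch] /all_nodesE[Qg Qch].
by apply/all_nodesE; split=> // i lt_i; apply: IH; [| exact: Pch | exact: Qch].
Qed.

Lemma all_nodes_lift P Q :
  (forall g, all_nodes P g -> Q g) -> forall g, all_nodes P g -> all_nodes Q g.
Proof.
move=> PQ; elim/spqn_children_ind => g IH Pg; apply/all_nodesE; split; first exact: PQ.
by move=> i lt_i; apply: IH => //; case/all_nodesE: Pg => _; apply.
Qed.

Lemma sc_children g i :
  (i < size (children g))%N -> sc (nth dflt (children g) i) \subset sc g.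
Proof.
case: g => [j a|cs|cs|n d] //=.
- elim: cs i => [|[w c] cs IHcs] [|i] //= lt_i; first exact: subsetUl.
  exact: subset_trans (IHcs i lt_i) (subsetUr _ _).
- elim: cs i => [|c cs IHcs] [|i] //= lt_i; first exact: subsetUl.
  exact: subset_trans (IHcs i lt_i) (subsetUr _ _).
- by case: i => [|[|i]] // _; [exact: subsetUl | exact: subsetUr].
Qed.

Lemma sc_sub_effU_cond g : sc g \subset eff g :|: cond g.
Proof. by apply/subsetP => i; rewrite /cond !inE; case: (i \in eff g). Qed.

Lemma eff_sum (cs : seq (R * spqn R N)) :
  eff (SSum cs) = \bigcup_(i < size cs) eff (nth dflt (map snd cs) i).
Proof.
elim: cs => [|[w c] cs IH]; first by rewrite big_ord0.
by rewrite big_ord_recl; move: IH => /= ->.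
Qed.

Lemma eff_prod (cs : seq (spqn R N)) :
  eff (SProd cs) = \bigcup_(i < size cs) eff (nth dflt cs i).
Proof.
elim: cs => [|c cs IH]; first by rewrite big_ord0.
by rewrite big_ord_recl; move: IH => /= ->.
Qed.

End Structure.

Lemma setI0_notin (T : finType) (A B : {set T}) x :
  A :&: B = set0 -> x \in A -> x \notin B.
Proof. by move/eqP; rewrite setI_eq0 => /disjointFr AB /AB ->. Qed.

Lemma acyclic_sink (T : finType) (e : rel T) (S : {set T}) :
  acyclic_rel e -> S != set0 -> exists2 j, j \in S & forall k, k \in S -> ~~ e j k.
Proof.
move=> acyc /set0Pn[j0 j0S].
pose reach j := #|[set k | connect e j k]|.
have [j jS jmin] := arg_minnP reach j0S.
exists j => // k kS; apply/negP => ejk.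
have: [set l | connect e k l] \proper [set l | connect e j l].
  apply/properP; split.
    by apply/subsetP => l; rewrite !inE; apply: connect_trans (connect1 ejk).
  by exists j; rewrite !inE ?connect0 ?(negbTE (acyc _ _ ejk)).
by move/proper_card; rewrite ltnNge jmin.
Qed.

Section Evaluation.

Variables (R : realFieldType) (N : nat).
Local Notation dflt := (dflt R N).

Lemma eval_sum (cs : seq (R * spqn R N)) x :
  eval (SSum cs) x =
  \sum_(i < size cs) nth 0 (map fst cs) i * eval (nth dflt (map snd cs) i) x.
Proof.
elim: cs => [|[w c] cs IH]; first by rewrite big_ord0.
by rewrite big_ord_recl; move: IH => /= ->.
Qed.

Lemma eval_prod (cs : seq (spqn R N)) x :
  eval (SProd cs) x = \prod_(i < size cs) eval (nth dflt cs i) x.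
Proof.
elim: cs => [|c cs IH]; first by rewrite big_ord0.
by rewrite big_ord_recl; move: IH => /= ->.
Qed.

Lemma eval_local (g : spqn R N) (x y : input N) :
  (forall i, i \in sc g -> x i = y i) -> eval g x = eval g y.
Proof.
elim/spqn_children_ind: g x y => g IH x y xy.
have {}IH k : (k < size (children g))%N ->
    eval (nth dflt (children g) k) x = eval (nth dflt (children g) k) y.
  by move=> lt_k; apply: IH => // i /(subsetP (sc_children lt_k)); apply: xy.
case: g IH xy => [i a|cs|cs|n d] IH xy.
- by rewrite /= xy ?set11.
- rewrite !eval_sum; apply: eq_bigr => k _; congr (_ * _); apply: IH.
  by rewrite size_map.
- by rewrite !eval_prod; apply: eq_bigr => k _; apply: IH.
- by rewrite /= (IH 0%N) ?(IH 1%N).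
Qed.

End Evaluation.

Section Marginalization.

Variables (R : realFieldType) (N : nat).
Implicit Types (E A B : {set 'I_N}) (b y z : input N) (F G : input N -> R).

Definition completes E b z : bool :=
  [forall i, if i \in E then z i != None else z i == b i].

Lemma sum_margE E b F : sum_marg E b F = \sum_(z | completes E b z) F z.
Proof. by []. Qed.

Lemma completesP E b z :
  reflect (forall i, if i \in E then z i <> None else z i = b i) (completes E b z).
Proof.
by apply: (iffP forallP) => zb i; have := zb i; case: (i \in E) => // /eqP.
Qed.

Lemma eq_sum_marg E b F G :
  (forall z, completes E b z -> F z = G z) -> sum_marg E b F = sum_marg E b G.
Proof. exact: eq_bigr. Qed.

Lemma sum_marg_set0 b F : sum_marg set0 b F = F b.
Proof.
rewrite sum_margE (big_pred1 b) // => z; apply/completesP/eqP => [zb|-> i].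
  by apply/ffunP => i; have := zb i; rewrite inE.
by rewrite inE.
Qed.

Lemma sum_marg_setU A B b F : A :&: B = set0 ->
  sum_marg (A :|: B) b F = sum_marg A b (fun z => sum_marg B z F).
Proof.
move=> AB; have notAB i : i \in A -> i \notin B by apply: setI0_notin.
pose restore y : input N := [ffun i => if i \in B then b i else y i].
rewrite sum_margE (partition_big restore (completes A b)); last first.
  move=> y /completesP yb; apply/completesP => i; have := yb i; rewrite inE ffunE.
  by case: (boolP (i \in A)) => [/notAB/negbTE->|_] //; case: (i \in B).
apply: eq_bigr => z /completesP zb; apply: eq_bigl => y.
apply/andP/completesP => [[/completesP yb /eqP/ffunP zy] i|yz].
  have := yb i; have := zy i; have := zb i; rewrite inE ffunE.
  by case: (i \in A); case: (i \in B) => //= _ <-.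
split; last first.
  apply/eqP/ffunP => i; have := yz i; have := zb i; rewrite ffunE.
  by case: (boolP (i \in B)) => // iB; case: (boolP (i \in A)) => [/notAB/negP|] //.
apply/completesP => i; have := yz i; have := zb i; rewrite inE.
by case: (i \in A); case: (i \in B) => /= zi yi; [exact: yi | rewrite yi | exact: yi | rewrite yi].
Qed.

Lemma sum_marg_mulr_local E b F G :
  (forall y, completes E b y -> G y = G b) ->
  sum_marg E b (fun y => F y * G y) = sum_marg E b F * G b.
Proof.
by move=> Gb; rewrite !sum_margE big_distrl; apply: eq_bigr => y /Gb ->.
Qed.

End Marginalization.

Section ProductNormalization.

Variables (R : realFieldType) (N : nat) (I : finType).
Variables (effs conds : I -> {set 'I_N}) (f : I -> input N -> R).

Hypothesis f_local : forall k (x y : input N),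
  (forall i, i \in effs k :|: conds k -> x i = y i) -> f k x = f k y.
Hypothesis f_normalized : forall k (b : input N),
  (forall i, i \in conds k -> b i != None) -> sum_marg (effs k) b (f k) = 1.
Hypothesis effs_disjoint : forall j k, j != k -> effs j :&: effs k = set0.
Hypothesis deps_acyclic : acyclic_rel (fun j k => effs j :&: conds k != set0).

Lemma sum_marg_prod (S : {set I}) (b : input N) :
  (forall i, i \in \bigcup_(k in S) conds k -> i \notin \bigcup_(k in S) effs k ->
     b i != None) ->
  sum_marg (\bigcup_(k in S) effs k) b (fun z => \prod_(k in S) f k z) = 1.
Proof.
have [n] := ubnP #|S|; elim: n S b => // n IH S b /ltnSE S_le bC.
have [->|S_n0] := eqVneq S set0; first by rewrite big_set0 sum_marg_set0 big_set0.
have [j jS sink] := acyclic_sink deps_acyclic S_n0.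
have off_j k i : k \in S -> i \in conds k -> i \notin effs j.
  by move=> kS; apply: setI0_notin; apply/eqP; rewrite setIC; exact: negbNE (sink k kS).
set S' := S :\ j.
have off_j' k i : k \in S' -> i \in effs k :|: conds k -> i \notin effs j.
  rewrite !inE => /andP[kj kS] /orP[ik|]; last exact: off_j.
  exact: setI0_notin (effs_disjoint kj) ik.
have effsS : \bigcup_(k in S) effs k = (\bigcup_(k in S') effs k) :|: effs j.
  by rewrite (big_setD1 j jS) setUC.
have disj : (\bigcup_(k in S') effs k) :&: effs j = set0.
  apply/setP => i; rewrite !inE; apply/negbTE/andP => -[/bigcupP[k kS' ik] ij].
  by move: ij; apply/negP; apply: off_j' kS' _; rewrite inE ik.
rewrite effsS sum_marg_setU // (eq_sum_marg (G := fun z => \prod_(k in S') f k z)).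
  apply: IH => [|i /bigcupP[k kS' ik] iE']; first by rewrite (cardsD1 j S) jS in S_le.
  apply: bC; first by apply/bigcupP; exists k => //; move: kS'; rewrite inE => /andP[].
  by rewrite effsS inE negb_or iE' (off_j' k) // inE ik orbT.
move=> z /completesP zb.
rewrite (eq_sum_marg (G := fun y => f j y * \prod_(k in S') f k y)); last first.
  by move=> y _; rewrite (big_setD1 j jS).
rewrite sum_marg_mulr_local ?f_normalized ?mul1r // => [i ij|y /completesP yz].
  have := zb i; case: ifP => [_ /eqP //|iE' ->].
  apply: bC; first by apply/bigcupP; exists j.
  by rewrite effsS inE negb_or iE' (off_j j).
apply: eq_bigr => k kS'; apply: f_local => i /(off_j' k i kS') ij.
by have := yz i; rewrite (negbTE ij).
Qed.

End ProductNormalization.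

Section Normalization.

Variables (R : realFieldType) (N : nat).
Implicit Types (g : spqn R N) (b : input N).
Local Notation dflt := (dflt R N).

Definition normalized g : Prop :=
  forall b, (forall i, i \in cond g -> b i != None) -> sum_marg (eff g) b (eval g) = 1.

Definition spqn_wf g : Prop :=
  weights_ok g /\ cond_complete_node g /\ cond_decomposable_node g /\ cond_sound_node g.

Lemma normalized_leaf i a : normalized (SLeaf i a).
Proof.
move=> b _; pose ba : input N := [ffun k => if k == i then Some a else b k].
rewrite sum_margE (eq_bigr (fun z : input N => if z i == Some a then 1 else 0)); last first.
  by move=> z /completesP/(_ i); rewrite set11 /=; case: (z i).
rewrite -big_mkcondr (big_pred1 ba) // => z /=.
apply/andP/eqP => [[/completesP zb /eqP zi]|->].
  apply/ffunP => k; rewrite ffunE; case: eqP => [->|/eqP ki] //.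
  by have := zb k; rewrite inE (negbTE ki).
by split; [apply/completesP => k; rewrite inE ffunE; case: eqP | rewrite ffunE eqxx].
Qed.

Lemma normalized_sum (cs : seq (R * spqn R N)) :
  weights_ok (SSum cs) -> cond_complete_node (SSum cs) ->
  (forall i, (i < size cs)%N -> normalized (nth dflt (map snd cs) i)) ->
  normalized (SSum cs).
Proof.
move=> [_ weights1] complete IH b bC.
have eff_child (i : 'I_(size cs)) : eff (SSum cs) = eff (nth dflt (map snd cs) i).
  rewrite eff_sum; apply/setP => x; apply/bigcupP/idP => [[k _]|]; last by exists i.
  by rewrite (complete k i).
rewrite (eq_sum_marg (G := fun z => \sum_(i < size cs)
  nth 0 (map fst cs) i * eval (nth dflt (map snd cs) i) z)); last by move=> z _; exact: eval_sum.
rewrite sum_margE exchange_big -weights1 -(big_map fst xpredT id) (big_nth 0) size_map big_mkord.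
apply: eq_bigr => i _; rewrite -mulr_sumr -sum_margE (eff_child i) IH ?mulr1 // => x.
rewrite /cond -(eff_child i) !inE => /andP[xE xsc]; apply: bC; rewrite /cond inE xE.
by apply: (subsetP (sc_children (g := SSum cs) (i := i) _)) xsc; rewrite /= size_map.
Qed.

Lemma normalized_prod (cs : seq (spqn R N)) :
  cond_decomposable_node (SProd cs) ->
  (forall i, (i < size cs)%N -> normalized (nth dflt cs i)) ->
  normalized (SProd cs).
Proof.
move=> [disj acyc] IH b bC.
have := @sum_marg_prod R N _ (fun k : 'I_(size cs) => eff (nth dflt cs k))
  (fun k => cond (nth dflt cs k)) (fun k => eval (nth dflt cs k)) _ _ disj acyc setT b.
have allT (k : 'I_(size cs)) : k \in setT = true by rewrite in_setT.
rewrite !(eq_bigl _ _ allT) eff_prod (eq_sum_marg (G := eval (SProd cs))); last first.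
  by move=> z _; rewrite eval_prod (eq_bigl _ _ allT).
apply.
- move=> k x y xy; apply: eval_local => i /(subsetP (sc_sub_effU_cond _)); exact: xy.
- by move=> k; apply: IH.
- move=> i /bigcupP[k _ ik] iE; apply: bC; rewrite /cond inE eff_prod iE /=.
  move: ik; rewrite /cond inE => /andP[_].
  exact: (subsetP (sc_children (g := SProd cs) (i := k) (ltn_ord k))).
Qed.

Lemma normalized_quot n d : cond_sound_node (SQuot n d) -> normalized (SQuot n d).
Proof.
move=> [d_pos [cond_dn [_ d_marg]]] b _.
have d_const z : completes (eff (SQuot n d)) b z -> eval d z = eval d b.
  move=> /completesP zb; apply: eval_local => i /(subsetP (sc_sub_effU_cond _)) i_d.
  have := zb i; case: ifP => // /setDP[i_n i_nd]; exfalso.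
  move: i_d; rewrite inE (negbTE i_nd) /= => /(subsetP cond_dn).
  by rewrite /cond inE i_n.
rewrite (eq_sum_marg (G := fun z => eval n z * (eval d b)^-1)); last first.
  by move=> z /d_const /= ->.
by rewrite sum_margE -mulr_suml -sum_margE -d_marg divff // gt_eqF.
Qed.

Lemma normalized_of_wf g : all_nodes spqn_wf g -> normalized g.
Proof.
elim/spqn_children_ind: g => g IH /all_nodesE[[hw [hc [hd hs]]] wf_children].
have {}IH i : (i < size (children g))%N -> normalized (nth dflt (children g) i).
  by move=> lt_i; apply: IH lt_i (wf_children i lt_i).
case: g IH hw hc hd hs {wf_children} => [i a|cs|cs|n d] IH hw hc hd hs.
- exact: normalized_leaf.
- by apply: normalized_sum => // i; rewrite -(size_map snd); apply: IH.
- exact: normalized_prod.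
- exact: normalized_quot.
Qed.

End Normalization.

Theorem theorem1 (R : realFieldType) (N : nat) (G : spqn R N) :
  spqn_valid G -> cond_complete G -> cond_decomposable G -> cond_sound G ->
  all_nodes (fun v : spqn R N =>
    forall b : input N,
      (forall i, i \in cond v -> b i != None) ->
      (forall i, i \notin cond v -> b i = None) ->
      sum_marg (eff v) b (eval v) = 1) G.
Proof.
move=> valid complete decomposable sound.
have wf : all_nodes (@spqn_wf R N) G by do 3!apply: all_nodes_and => //.
by apply: all_nodes_lift wf => v /normalized_of_wf normed b bC _; apply: normed.
Qed.
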